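(* Let $k_1,k_2,k_3\ge1$, let $G$ be the grid graph on $\{0,\dots,k_1\}\times\{0,\dots,k_2\}\times\{0,\dots,k_3\}$ (adjacency: differing by $1$ in exactly one coordinate), let $\mathcal B=\{B_1,\dots,B_m\}$ with $B_i=[a_i',a_i'']\times[b_i',b_i'']\times[c_i',c_i'']\subseteq\mathbb R^3$ boxes with integer endpoints $0\le a_i'<a_i''\le k_1$, $0\le b_i'<b_i''\le k_2$, $0\le c_i'<c_i''\le k_3$, and let $G_i$ be the subgraph of $G$ induced by the vertices in $B_i$. Let $\widetilde G$ be the graph with vertex set $V(G)\cup\{(u,i):1\le i\le m,\ u\in V(G_i)\}$ and edges: all edges of $G$; the edges $(u,i)(w,i)$ for $uw$ an edge of $G_i$; and the edges $u\,(u,i)$ for $u\in V(G_i)$. Let $\alpha=(0,0,0)$ and let $\omega=\omega(\mathcal B)$ be the maximum number of pairwise intersecting boxes of $\mathcal B$. Then every vertex of the pointed median graph $\widetilde G_\alpha$ has out-degree at most $\omega+3$. In particular, the maximum degree of $\widetilde G$ is at most $\omega+6$ and the clique number of the pointed contact graph $\Gamma_\alpha(\widetilde G)$ is at most $\omega+3$.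
   Context: $\widetilde G$ is a median graph (connected, with $I(x,y)\cap I(y,z)\cap I(z,x)$ a single vertex for all $x,y,z$, where $I(u,v)$ is the set of vertices on shortest $u$–$v$ paths). The pointed median graph $\widetilde G_\alpha$ is $\widetilde G$ with each edge $xy$ directed from $x$ to $y$ iff $d(x,\alpha)<d(y,\alpha)$, $d$ the graph distance; the tail is the origin. The Djoković–Winkler relation $\Theta$: $xy\,\Theta\,zw$ iff $d(x,z)+d(y,w)\ne d(x,w)+d(y,z)$, an equivalence relation on edges of a median graph. Two $\Theta$-classes cross if some 4-cycle has two opposite edges in one and the other two in the other. The pointed contact graph $\Gamma_\alpha(\widetilde G)$ has the $\Theta$-classes as vertices, two distinct classes adjacent iff they cross or there exist edges, one from each class, which (directed as in $\widetilde G_\alpha$) have the same origin and lie in no common 4-cycle. *)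

From mathcomp Require Import all_boot all_order.
Set Implicit Arguments. Unset Strict Implicit. Unset Printing Implicit Defensive.

Section GraphNotions.
Variables (T : finType) (adj : rel T).

Fixpoint ball (x : T) (n : nat) : {set T} :=
  if n is n'.+1 then ball x n' :|: [set y | [exists z in ball x n', adj z y]]
  else [set x].

(* graph distance: least n with y within n steps of x (#|T| if unreachable) *)
Definition gdist (x y : T) : nat :=
  find (fun n => y \in ball x n) (iota 0 #|T|).

Definition is_edge (e : T * T) : bool := adj e.1 e.2.

Definition Theta (e f : T * T) : bool :=
  gdist e.1 f.1 + gdist e.2 f.2 != gdist e.1 f.2 + gdist e.2 f.1.

(* the Theta-class of an edge, as the set of (both orientations of) edges *)
Definition theta_class (e : T * T) : {set T * T} :=
  [set f | is_edge f && Theta e f].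

Definition is_theta_class (A : {set T * T}) : Prop :=
  exists2 e, is_edge e & A = theta_class e.

Definition cycle4 (v0 v1 v2 v3 : T) : bool :=
  [&& uniq [:: v0; v1; v2; v3], adj v0 v1, adj v1 v2, adj v2 v3 & adj v3 v0].

Definition on_cycle4 (e : T * T) (v0 v1 v2 v3 : T) : bool :=
  has (fun p : T * T => ((p.1 == e.1) && (p.2 == e.2)) || ((p.1 == e.2) && (p.2 == e.1)))
      [:: (v0, v1); (v1, v2); (v2, v3); (v3, v0)].

Definition classes_cross (A B : {set T * T}) : Prop :=
  exists v0 v1 v2 v3, [/\ cycle4 v0 v1 v2 v3,
    (v0, v1) \in A, (v2, v3) \in A, (v1, v2) \in B & (v3, v0) \in B].

Definition directed_from (alpha : T) (e : T * T) : bool :=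
  gdist e.1 alpha < gdist e.2 alpha.

Definition contact_adj (alpha : T) (A B : {set T * T}) : Prop :=
  classes_cross A B \/
  exists e f, [/\ (e \in A) && (f \in B), directed_from alpha e, directed_from alpha f,
     e.1 = f.1 &
     ~ exists v0 v1 v2 v3,
         [&& cycle4 v0 v1 v2 v3, on_cycle4 e v0 v1 v2 v3 & on_cycle4 f v0 v1 v2 v3]].

Definition contact_clique (alpha : T) (C : {set {set T * T}}) : Prop :=
  (forall A, A \in C -> is_theta_class A) /\
  (forall A B, A \in C -> B \in C -> A != B -> contact_adj alpha A B).

Definition out_degree (alpha x : T) : nat :=
  #|[set y | adj x y && (gdist x alpha < gdist y alpha)]|.

Definition degree (x : T) : nat := #|[set y | adj x y]|.

End GraphNotions.

Definition gridV (k1 k2 k3 : nat) : finType :=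
  ('I_k1.+1 * 'I_k2.+1 * 'I_k3.+1)%type.

Definition cx k1 k2 k3 (p : gridV k1 k2 k3) : nat := p.1.1.
Definition cy k1 k2 k3 (p : gridV k1 k2 k3) : nat := p.1.2.
Definition cz k1 k2 k3 (p : gridV k1 k2 k3) : nat := p.2.

Definition diff1 (u v : nat) : bool := (u == v.+1) || (v == u.+1).

Definition grid_adj k1 k2 k3 (p q : gridV k1 k2 k3) : bool :=
  [|| [&& diff1 (cx p) (cx q), cy p == cy q & cz p == cz q],
      [&& cx p == cx q, diff1 (cy p) (cy q) & cz p == cz q]
    | [&& cx p == cx q, cy p == cy q & diff1 (cz p) (cz q)]].

Record boxes (m : nat) := Boxes {
  a1 : 'I_m -> nat; a2 : 'I_m -> nat;
  b1 : 'I_m -> nat; b2 : 'I_m -> nat;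
  c1 : 'I_m -> nat; c2 : 'I_m -> nat }.

Definition boxes_ok k1 k2 k3 m (B : boxes m) : Prop :=
  forall i, [/\ a1 B i < a2 B i <= k1, b1 B i < b2 B i <= k2 & c1 B i < c2 B i <= k3].

Definition in_box k1 k2 k3 m (B : boxes m) (i : 'I_m) (p : gridV k1 k2 k3) : bool :=
  [&& a1 B i <= cx p <= a2 B i, b1 B i <= cy p <= b2 B i & c1 B i <= cz p <= c2 B i].

Definition intervals_meet (s t u v : nat) : bool := (s <= v) && (u <= t).

(* the closed boxes B_i and B_j (as subsets of R^3) intersect:
   a product of closed intervals meets another iff the intervals meet coordinatewise *)
Definition boxes_meet m (B : boxes m) (i j : 'I_m) : bool :=
  [&& intervals_meet (a1 B i) (a2 B i) (a1 B j) (a2 B j),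
      intervals_meet (b1 B i) (b2 B i) (b1 B j) (b2 B j) &
      intervals_meet (c1 B i) (c2 B i) (c1 B j) (c2 B j)].

Definition omega m (B : boxes m) : nat :=
  \max_(S : {set 'I_m} | [forall i in S, forall j in S, boxes_meet B i j]) #|S|.

(* vertices of G~ : (u, None) stands for u in V(G), (u, Some i) for (u,i) *)
Definition tV k1 k2 k3 m : finType := (gridV k1 k2 k3 * option 'I_m)%type.

Definition tvalid k1 k2 k3 m (B : boxes m) (v : tV k1 k2 k3 m) : bool :=
  if v.2 is Some i then in_box B i v.1 else true.

Definition tadj k1 k2 k3 m (B : boxes m) (u v : tV k1 k2 k3 m) : bool :=
  [&& tvalid B u, tvalid B v &
    match u.2, v.2 with
    | None, None => grid_adj u.1 v.1
    | Some i, Some j => (i == j) && grid_adj u.1 v.1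
    | None, Some _ => u.1 == v.1
    | Some _, None => u.1 == v.1
    end].

Definition alpha0 k1 k2 k3 m : tV k1 k2 k3 m := ((ord0, ord0, ord0), None).

From mathcomp Require Import all_boot all_order.
From mathcomp Require Import zify.
Set Implicit Arguments. Unset Strict Implicit. Unset Printing Implicit Defensive.

(* The distance of G~ is explicit: the l1-distance of the grid points plus a layer cost
   (0 inside a layer, 1 between V(G) and a copy G_i, 2 between two copies), because a
   shortest path can always stay in a box or pass through V(G).  Hence the Theta-class
   of an edge is determined by the cut it crosses: a grid hyperplane x_k = t + 1/2, or
   the boundary of the copy G_i.  An edge leaving x away from alpha = (0,0,0) either
   increases one of the three coordinates or enters a copy G_i with x in B_i, and the
   boxes containing x pairwise meet; this bounds the out-degree by omega + 3, and all
   neighbours by omega + 6.  In a clique of the pointed contact graph, two hyperplane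
   classes of the same axis coincide: parallel hyperplanes never cross, and the origin
   of a directed edge of the hyperplane x_k = t + 1/2 has k-th coordinate t.  Two box
   classes i <> j are adjacent only if B_i and B_j meet, so the clique has at most
   3 + omega classes. *)

Lemma find_iota_min (p : pred nat) N n :
  n < N -> p n -> (forall i, i < n -> ~~ p i) -> find p (iota 0 N) = n.
Proof.
move=> ltnN pn min_n; have hasp : has p (iota 0 N).
  by apply/hasP; exists n; rewrite // mem_iota.
have lt_find : find p (iota 0 N) < N by rewrite -[X in _ < X](size_iota 0) -has_find.
apply/eqP; rewrite eqn_leq; apply/andP; split.
  by rewrite leqNgt; apply/negP => /(before_find 0); rewrite nth_iota // pn.
have := nth_find 0 hasp; rewrite nth_iota //.
by apply: contraTT; rewrite -ltnNge => /min_n.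
Qed.

Section Balls.
Variables (T : finType) (adj : rel T).

Lemma ball_step x n y z : y \in ball adj x n -> adj y z -> z \in ball adj x n.+1.
Proof. by move=> yx yz; rewrite /= !inE; apply/orP; right; apply/existsP; exists y; rewrite yx. Qed.

Lemma ball_prepend x y w n : adj x y -> w \in ball adj y n -> w \in ball adj x n.+1.
Proof.
move=> xy; elim: n w => [|n IHn] w.
  by rewrite inE => /eqP ->; apply: ball_step xy; rewrite inE.
rewrite [w \in _]inE => /orP[/IHn wx|]; first by rewrite inE wx.
by rewrite inE => /existsP[z /andP[/IHn zx zw]]; apply: ball_step zw.
Qed.

Section DistanceCharacterization.
Variables (P : pred T) (d : T -> T -> nat).
Hypotheses (d_refl : forall x, d x x = 0) (d_eq0 : forall x y, d x y = 0 -> x = y).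
Hypothesis d_edge : forall x y z, adj y z -> d x z <= d x y + 1.
Hypothesis d_geodesic : forall x y n, P x -> P y -> d x y = n.+1 ->
  exists2 z, adj x z & P z /\ d z y = n.
(* [gdist] only searches radii below [#|T|]. *)
Hypothesis d_lt_card : forall x y, d x y < #|T|.

Lemma ball_dist_le x n y : y \in ball adj x n -> d x y <= n.
Proof.
elim: n y => [|n IHn] y; first by rewrite /= inE => /eqP ->; rewrite d_refl.
rewrite [y \in _]inE => /orP[/IHn|]; first lia.
by rewrite inE => /existsP[z /andP[/IHn zx /(d_edge x)]]; lia.
Qed.

Lemma mem_ball_dist x y : P x -> P y -> y \in ball adj x (d x y).
Proof.
move=> Px Py; move dxy: (d x y) => n; elim: n x Px dxy => [|n IHn] x Px dxy.
  by rewrite (d_eq0 dxy) /= inE.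
have [z xz [Pz dzy]] := d_geodesic Px Py dxy.
exact: ball_prepend xz (IHn z Pz dzy).
Qed.

Lemma gdist_charac x y : P x -> P y -> gdist adj x y = d x y.
Proof.
move=> Px Py; apply: find_iota_min; [exact: d_lt_card | exact: mem_ball_dist |].
by move=> i lti; apply/negP => /ball_dist_le; lia.
Qed.

End DistanceCharacterization.
End Balls.

Lemma card_imsetU_le (aT bT rT : finType) (f : aT -> rT) (g : bT -> rT)
    (A : {set aT}) (C : {set bT}) :
  #|f @: A :|: g @: C| <= #|A| + #|C|.
Proof.
rewrite cardsU; apply: leq_trans (leq_subr _ _) _.
exact: leq_add (leq_imset_card _ _) (leq_imset_card _ _).
Qed.

Definition natdist (a b : nat) : nat := (a - b) + (b - a).

Lemma diff1_cut a b t : diff1 a b -> ((a <= t) != (b <= t)) = (minn a b == t).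
Proof. by move=> step; apply/idP/eqP; move: step; rewrite /diff1; lia. Qed.

Section Grid.
Variables k1 k2 k3 : nat.
Local Notation grid := (gridV k1 k2 k3).

Definition coord (k : 'I_3) (p : grid) : nat :=
  match val k with 0 => cx p | 1 => cy p | _ => cz p end.

Definition bound (k : 'I_3) : nat := match val k with 0 => k1 | 1 => k2 | _ => k3 end.

Lemma coord_le k p : coord k p <= bound k.
Proof. by case: k => [[|[|[|k]]] lt3] //; rewrite -ltnS; apply: ltn_ord. Qed.

Lemma grid_eq p q : (forall k, coord k p = coord k q) -> p = q.
Proof.
case: p q => [[a b] c] [[a' b'] c'] eq_pq.
have /val_inj -> : val a = val a' := eq_pq (@Ordinal 3 0 isT).
have /val_inj -> : val b = val b' := eq_pq (@Ordinal 3 1 isT).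
by have /val_inj -> : val c = val c' := eq_pq (@Ordinal 3 2 isT).
Qed.

Definition set_coord (k : 'I_3) (p : grid) (t : nat) : grid :=
  match val k with
  | 0 => (inord t, p.1.2, p.2) | 1 => (p.1.1, inord t, p.2) | _ => (p.1.1, p.1.2, inord t)
  end.

Lemma coord_set k j p t : t <= bound k ->
  coord j (set_coord k p t) = if j == k then t else coord j p.
Proof.
case: k j => [[|[|[|k]]] lt3] // [[|[|[|j]]] lt3'] //= tb;
  by rewrite /set_coord /coord /cx /cy /cz /= inordK.
Qed.

Definition axis_adj (k : 'I_3) (p q : grid) : Prop :=
  diff1 (coord k p) (coord k q) /\ forall j, j != k -> coord j p = coord j q.

Lemma grid_adjP p q : reflect (exists k, axis_adj k p q) (grid_adj p q).
Proof.
apply: (iffP idP).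
  case/or3P => /and3P[d e1 e2];
    [exists (@Ordinal 3 0 isT) | exists (@Ordinal 3 1 isT) | exists (@Ordinal 3 2 isT)];
    (split; first assumption); by case=> [[|[|[|j]]] ?] // _; apply/eqP.
case=> -[[|[|[|k]]] lt3] // [d e];
  move: (e (@Ordinal 3 0 isT)) (e (@Ordinal 3 1 isT)) (e (@Ordinal 3 2 isT));
  rewrite /grid_adj /coord /= in d *; move: d; lia.
Qed.

Definition grid_dist (p q : grid) : nat := \sum_(k < 3) natdist (coord k p) (coord k q).

Lemma grid_distC p q : grid_dist p q = grid_dist q p.
Proof. by apply: eq_bigr => k _; rewrite /natdist addnC. Qed.

Lemma grid_dist_refl p : grid_dist p p = 0.
Proof. by apply: big1 => k _; rewrite /natdist subnn. Qed.

Lemma grid_dist_le p q : grid_dist p q <= k1 + k2 + k3.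
Proof.
have natdist_le k : natdist (coord k p) (coord k q) <= bound k.
  by have := coord_le k p; have := coord_le k q; rewrite /natdist; lia.
by rewrite /grid_dist !big_ord_recr big_ord0 /= add0n !leq_add.
Qed.

Lemma grid_dist_eq0 p q : grid_dist p q = 0 -> p = q.
Proof.
move/eqP; rewrite sum_nat_eq0 => /forallP dist0; apply: grid_eq => k.
by move/(_ k)/eqP: dist0; rewrite /natdist; lia.
Qed.

Lemma grid_dist_axis k p q r : (forall j, j != k -> coord j p = coord j q) ->
  grid_dist p r + natdist (coord k q) (coord k r) =
  grid_dist q r + natdist (coord k p) (coord k r).
Proof.
move=> eq_pq; rewrite /grid_dist (bigD1 k) // [in RHS](bigD1 k) //=.
rewrite (eq_bigr (fun j => natdist (coord j q) (coord j r))) => [|j /eq_pq -> //].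
lia.
Qed.

Definition axis (p q : grid) : 'I_3 := odflt ord0 [pick k | coord k p != coord k q].

Lemma axis_adj_axis k p q : axis_adj k p q -> axis p q = k.
Proof.
rewrite /axis => -[d e]; case: pickP => [j /= ne_j | /(_ k) /=].
  by apply/eqP; apply: contraNT ne_j => /e ->.
by move: d; rewrite /diff1; lia.
Qed.

Lemma grid_geodesic_step p q : p != q -> exists p', [/\ grid_adj p p',
  (grid_dist p' q).+1 = grid_dist p q &
  forall j, minn (coord j p) (coord j q) <= coord j p' <= maxn (coord j p) (coord j q)].
Proof.
move=> ne_pq; have [k ne_k] : exists k, coord k p != coord k q.
  apply/existsP; apply: contraNT ne_pq => /existsPn eq_k.
  by apply/eqP; apply: grid_eq => k; apply/eqP; rewrite -[_ == _]negbK eq_k.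
pose t := if coord k p < coord k q then (coord k p).+1 else (coord k p).-1.
have t_le : t <= bound k.
  by have := coord_le k p; have := coord_le k q; rewrite /t; case: ltnP; lia.
have coord_p' j : coord j (set_coord k p t) = if j == k then t else coord j p.
  exact: coord_set.
have off_k j : j != k -> coord j p = coord j (set_coord k p t).
  by rewrite coord_p' => /negbTE ->.
exists (set_coord k p t); split.
- apply/grid_adjP; exists k; split => //.
  by rewrite coord_p' eqxx /diff1 /t; case: ltnP; lia.
- have := grid_dist_axis q off_k; rewrite coord_p' eqxx /natdist /t.
  by case: ltnP; lia.
- move=> j; rewrite coord_p'; case: eqP => [->|_]; last lia.
  by rewrite /t; case: ltnP; lia.
Qed.

End Grid.

Section Tilde.
Variables (k1 k2 k3 m : nat) (B : boxes m).
Local Notation grid := (gridV k1 k2 k3).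
Local Notation V := (tV k1 k2 k3 m).
Local Notation adj := (@tadj k1 k2 k3 m B).
Local Notation alpha := (alpha0 k1 k2 k3 m).

Lemma in_box_between i (p q r : grid) :
  (forall j, minn (coord j p) (coord j q) <= coord j r <= maxn (coord j p) (coord j q)) ->
  in_box B i p -> in_box B i q -> in_box B i r.
Proof.
move=> btw; move: (btw (@Ordinal 3 0 isT)) (btw (@Ordinal 3 1 isT)) (btw (@Ordinal 3 2 isT)).
rewrite /in_box /coord /=; lia.
Qed.

Lemma boxes_meet_in_box i j (p : grid) : in_box B i p -> in_box B j p -> boxes_meet B i j.
Proof. rewrite /in_box /boxes_meet /intervals_meet; lia. Qed.

Lemma leq_omega (S : {set 'I_m}) :
  (forall i j, i \in S -> j \in S -> boxes_meet B i j) -> #|S| <= omega B.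
Proof.
move=> meetS; apply: (leq_bigmax_cond (F := fun S : {set 'I_m} => #|S|)).
by apply/forallP => i; apply/implyP => iS; apply/forallP => j; apply/implyP; apply: meetS.
Qed.

Definition boxes_at (p : grid) : {set 'I_m} := [set i | in_box B i p].

Lemma card_boxes_at p : #|boxes_at p| <= omega B.
Proof. by apply: leq_omega => i j; rewrite !inE; apply: boxes_meet_in_box. Qed.

Definition layer_dist (l l' : option 'I_m) : nat :=
  match l, l' with
  | None, None => 0
  | Some i, Some j => if i == j then 0 else 2
  | _, _ => 1
  end.

Definition tdist (v w : V) : nat := grid_dist v.1 w.1 + layer_dist v.2 w.2.

(* The key [inl (k, t)] names the hyperplane between levels [t] and [t+1] of axis [k],
   and [inr i] the edges [u (u,i)]; [side c] is the corresponding halfspace. *)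
Local Notation key := ('I_3 * nat + 'I_m)%type.

Definition ekey (e : V * V) : key :=
  match e.1.2, e.2.2 with
  | Some i, None | None, Some i => inr i
  | _, _ => let k := axis e.1.1 e.2.1 in inl (k, minn (coord k e.1.1) (coord k e.2.1))
  end.

Definition side (c : key) (z : V) : bool :=
  match c with inl (k, t) => coord k z.1 <= t | inr i => z.2 == Some i end.

Variant edge_spec (x y : V) : key -> Prop :=
  | FlatEdge k of x.2 = y.2 & axis_adj k x.1 y.1 :
      edge_spec x y (inl (k, minn (coord k x.1) (coord k y.1)))
  | UpEdge i of x.1 = y.1 & x.2 = None & y.2 = Some i & in_box B i x.1 : edge_spec x y (inr i)
  | DownEdge i of x.1 = y.1 & x.2 = Some i & y.2 = None & in_box B i x.1 : edge_spec x y (inr i).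

Lemma edgeP x y : adj x y -> edge_spec x y (ekey (x, y)).
Proof.
case: x y => [u [i|]] [w [j|]]; rewrite /tadj /tvalid /ekey /=.
- case/and3P => _ _ /andP[/eqP <- /grid_adjP[k adj_k]].
  by rewrite (axis_adj_axis adj_k); apply: FlatEdge.
- by case/andP => iu /eqP uw; apply: DownEdge.
- by case/andP => jw /eqP uw; apply: UpEdge; rewrite ?uw.
- by move=> /grid_adjP[k adj_k]; rewrite (axis_adj_axis adj_k); apply: FlatEdge.
Qed.

Lemma eq_None_Some (i : 'I_m) : (None == Some i) = false.
Proof. by []. Qed.

Lemma adj_valid x y : adj x y -> tvalid B x /\ tvalid B y.
Proof. by case/and3P. Qed.

Lemma tdist_edge x y z : adj x y ->
  if side (ekey (x, y)) z == side (ekey (x, y)) x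
  then tdist y z = (tdist x z).+1 else tdist x z = (tdist y z).+1.
Proof.
rewrite /tdist; case/edgeP => [k eq_l [step eq_off] | i eq_u lx ly _ | i eq_u lx ly _] /=.
- move: (grid_dist_axis z.1 eq_off) step; rewrite eq_l /natdist /diff1.
  move: (coord k x.1) (coord k y.1) (coord k z.1) => a b c.
  by case: (leqP c (minn a b)) => ?; case: (leqP a (minn a b)) => ? /=; lia.
- rewrite eq_u lx ly; case: z.2 => [j|] /=; rewrite ?(inj_eq Some_inj) ?eq_None_Some /=;
    last lia.
  by rewrite [j == i]eq_sym; case: (i =P j) => _ /=; lia.
- rewrite eq_u lx ly; case: z.2 => [j|] /=; rewrite ?(inj_eq Some_inj) ?eq_None_Some eqxx /=;
    last lia.
  by rewrite [j == i]eq_sym; case: (i =P j) => _ /=; lia.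
Qed.

Lemma tdistC x y : tdist x y = tdist y x.
Proof.
rewrite /tdist grid_distC; congr (_ + _).
by case: x.2 y.2 => [i|] [j|] //=; rewrite eq_sym.
Qed.

Lemma tdist_refl x : tdist x x = 0.
Proof.
by rewrite /tdist grid_dist_refl; case: x.2 => [i|] //=; rewrite eqxx.
Qed.

Lemma tdist_eq0 x y : tdist x y = 0 -> x = y.
Proof.
case: x y => [u l] [w l']; rewrite /tdist /= => dist0.
have -> : u = w by apply: grid_dist_eq0; lia.
congr (_, _); move: dist0; case: l l' => [i|] [j|] //=; try lia.
by case: (i =P j) => [->|] //; lia.
Qed.

Lemma tdist_lipschitz x y z : adj y z -> tdist x z <= tdist x y + 1.
Proof. by move/(tdist_edge x); rewrite ![tdist x _]tdistC; case: ifP; lia. Qed.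

Lemma tdist_geodesic x y n : tvalid B x -> tvalid B y -> tdist x y = n.+1 ->
  exists2 z, adj x z & tvalid B z /\ tdist z y = n.
Proof.
case: x y => [u l] [w l'] vx vy; rewrite /tdist /=.
have flat_step : (if l is Some i then in_box B i w else true) -> u != w ->
    exists2 z, adj (u, l) z & [/\ tvalid B z, z.2 = l & (grid_dist z.1 w).+1 = grid_dist u w].
  move=> w_in ne_uw; have [u' [adj_u' dist_u' btw]] := grid_geodesic_step ne_uw.
  have vu' : tvalid B (u', l) by case: l vx w_in => //= i; apply: in_box_between btw.
  exists (u', l) => //; rewrite /tadj vx vu' /=.
  by case: l {vx w_in vu'} => [i|] //=; rewrite eqxx.
case: l vx flat_step => [i|] vx flat_step dist_n.
- case: (eqVneq l' (Some i)) => [el'|ne_l'].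
  + subst l'; move: dist_n; rewrite /= eqxx addn0 => dist_n.
    have ne_uw : u != w by apply: contra_eqN dist_n => /eqP <-; rewrite grid_dist_refl.
    have [z adj_z [vz lz dz]] := flat_step vy ne_uw.
    by exists z => //; split=> //; rewrite lz /= eqxx addn0; apply: succn_inj; rewrite dz.
  + exists (u, None); first by rewrite /tadj /= vx eqxx.
    split=> //=; move: dist_n ne_l'; case: l' {vy} => [j|] /=; last lia.
    by case: (i =P j) => [<- _ /eqP //|_ dist_n _]; lia.
- case: (eqVneq u w) => [euw|ne_uw].
  + subst w; move: dist_n; rewrite grid_dist_refl; case: l' vy => [j|] vy //= d1.
    exists (u, Some j); first by rewrite /tadj /= vy eqxx.
    by split=> //; rewrite grid_dist_refl /= eqxx; case: n d1.
  + have [z adj_z [vz lz dz]] := flat_step isT ne_uw.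
    exists z => //; split=> //; rewrite lz.
    by apply: succn_inj; rewrite -addSn dz.
Qed.

Lemma layer_dist_le l l' : layer_dist l l' <= m.
Proof.
have m_gt0 (i : 'I_m) : 0 < m by apply: leq_ltn_trans (ltn_ord i).
case: l l' => [i|] [j|] //=; try exact: m_gt0.
case: (i =P j) => // ne_ij; have : val i != val j by apply: contra_notN ne_ij => /eqP/val_inj.
by case: i j {ne_ij} => [a lt_a] [b lt_b] /=; lia.
Qed.

Lemma tdist_lt_card x y : tdist x y < #|V|.
Proof.
rewrite /tdist /tV /gridV !card_prod card_option !card_ord.
have := grid_dist_le x.1 y.1; have := layer_dist_le x.2 y.2.
move: (grid_dist _ _) (layer_dist _ _) => g l; nia.
Qed.

Lemma gdist_tdist x y : tvalid B x -> tvalid B y -> gdist adj x y = tdist x y.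
Proof.
exact: (gdist_charac (P := tvalid B) tdist_refl tdist_eq0 tdist_lipschitz tdist_geodesic tdist_lt_card).
Qed.

Lemma Theta_side x y p q : adj x y -> adj p q ->
  Theta adj (x, y) (p, q) = (side (ekey (x, y)) p != side (ekey (x, y)) q).
Proof.
move=> xy pq; have [vx vy] := adj_valid xy; have [vp vq] := adj_valid pq.
rewrite /Theta /= !gdist_tdist //; have := tdist_edge p xy; have := tdist_edge q xy.
case: (side _ p); case: (side _ q); case: (side _ x) => /=;
  move: (tdist x p) (tdist y p) (tdist x q) (tdist y q); lia.
Qed.

Lemma edge_crosses_side c p q : adj p q -> (side c p != side c q) = (ekey (p, q) == c).
Proof.
case/edgeP => [k eq_l [step eq_off] | i eq_u lp lq _ | i eq_u lp lq _];
  case: c => [[k' t]|i'] /=; rewrite ?eq_l ?eq_u ?eqxx //.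
- rewrite (inj_eq inl_inj) xpair_eqE; have [<-{k'}|ne_k] := eqVneq k k'.
    exact: diff1_cut.
  by rewrite eq_off ?eqxx // eq_sym.
- by rewrite lp lq eq_None_Some (inj_eq Some_inj) (inj_eq (@inr_inj _ _)); case: (i == i').
- by rewrite lp lq eq_None_Some (inj_eq Some_inj) (inj_eq (@inr_inj _ _)); case: (i == i').
Qed.

Lemma mem_theta_class e f : is_edge adj e ->
  (f \in theta_class adj e) = is_edge adj f && (ekey f == ekey e).
Proof.
case: e f => [x y] [p q] xy; rewrite /theta_class inE /is_edge /=.
by case pq: (adj p q) => //=; rewrite Theta_side // edge_crosses_side.
Qed.

Lemma coord_alpha k : coord k alpha.1 = 0.
Proof. by case: k => [[|[|[|k]]] ?]. Qed.

Lemma directed_fromE x y : adj x y ->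
  directed_from adj alpha (x, y) = (side (ekey (x, y)) alpha == side (ekey (x, y)) x).
Proof.
move=> xy; have [vx vy] := adj_valid xy.
rewrite /directed_from /= !gdist_tdist //; have := tdist_edge alpha xy.
by case: ifP => _ ->; rewrite ?ltnSn // ltnNge leqnSn.
Qed.

Lemma directed_flat_origin f k t : is_edge adj f -> directed_from adj alpha f ->
  ekey f = inl (k, t) -> coord k f.1.1 = t.
Proof.
case: f => x y xy; rewrite directed_fromE //; case: (edgeP xy) => [k' _ [step _] | i | i] //.
by rewrite /= coord_alpha => dir [<- <-]; move: step dir; rewrite /diff1; lia.
Qed.

Lemma vertical_edge_in_box f i : is_edge adj f -> ekey f = inr i -> in_box B i f.1.1.
Proof. by case: f => x y xy; case: (edgeP xy) => // j _ _ _ j_in [<-]. Qed.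

Definition key_type (c : key) : 'I_3 + 'I_m :=
  match c with inl (k, _) => inl k | inr i => inr i end.

Definition signature (x y : V) : ('I_3 + 'I_m) * bool :=
  (key_type (ekey (x, y)), directed_from adj alpha (x, y)).

Lemma signature_inj x : {in [set y | adj x y] &, injective (signature x)}.
Proof.
move=> y y'; rewrite !inE => xy xy'; rewrite /signature (directed_fromE xy) (directed_fromE xy').
case: y y' xy xy' => [u l] [u' l'] xy xy'.
case: (edgeP xy) => [k eq_l [step eq_off] | i eq_u lx ly _ | i eq_u lx ly _];
  case: (edgeP xy') => [k' eq_l' [step' eq_off'] | i' eq_u' lx' ly' _ | i' eq_u' lx' ly' _] //=;
  move=> [eq_type eq_dir].
- subst k'; move: eq_dir; rewrite /= !coord_alpha => eq_dir.
  congr (_, _); last by move: eq_l eq_l' => /= <- <-.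
  apply: grid_eq => j; have [->|ne_j] := eqVneq j k; last by rewrite -eq_off // -eq_off'.
  by move: step step' eq_dir; rewrite /diff1 /=; lia.
- by subst i'; move: eq_u eq_u' ly ly' => /= <- <- -> ->.
- by rewrite lx' in lx.
- by rewrite lx' in lx.
- by subst i'; move: eq_u eq_u' ly ly' => /= <- <- -> ->.
Qed.

Lemma out_degree_le x : out_degree adj alpha x <= omega B + 3.
Proof.
rewrite /out_degree; set Out := [set y | _].
have out_nb : {subset Out <= [set y | adj x y]} by move=> y; rewrite !inE => /andP[].
rewrite -(card_in_imset (sub_in2 out_nb (@signature_inj x))).
have sig_out : signature x @: Out \subset
    [set (inl k, true) | k in [set: 'I_3]] :|: [set (inr i, true) | i in boxes_at x.1].
  apply/subsetP => s /imsetP[y]; rewrite inE => /andP[xy dir] ->.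
  change (is_true (directed_from adj alpha (x, y))) in dir; rewrite /signature dir inE.
  case Ekey: (ekey (x, y)) => [[k t]|i] /=; apply/orP; [left|right].
    by rewrite imset_f ?inE.
  by rewrite imset_f // inE (vertical_edge_in_box (f := (x, y)) xy Ekey).
apply: leq_trans (subset_leq_card sig_out) _; apply: leq_trans (card_imsetU_le _ _ _ _) _.
by rewrite cardsT card_ord addnC leq_add2r card_boxes_at.
Qed.

Lemma degree_le x : degree adj x <= omega B + 6.
Proof.
rewrite /degree -(card_in_imset (@signature_inj x)).
have sig_nb : signature x @: [set y | adj x y] \subset
    [set (inl kb.1, kb.2) | kb in [set: 'I_3 * bool]] :|:
    [set (inr i, x.2 == None) | i in boxes_at x.1].
  apply/subsetP => s /imsetP[y]; rewrite inE => xy ->; rewrite /signature inE.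
  case: (edgeP xy) (directed_fromE xy) => [k _ _ | i _ lx _ i_in | i _ lx _ i_in] dir /=;
    apply/orP; [left|right|right].
  - exact: (imset_f (fun kb : 'I_3 * bool => (inl kb.1 : 'I_3 + 'I_m, kb.2))
                    (in_setT (k, directed_from adj alpha (x, y)))).
  - by rewrite dir /= lx eq_None_Some /=; apply: imset_f; rewrite inE.
  - by rewrite dir /= lx eqxx eq_None_Some /=; apply: imset_f; rewrite inE.
apply: leq_trans (subset_leq_card sig_nb) _; apply: leq_trans (card_imsetU_le _ _ _ _) _.
by rewrite cardsT card_prod card_ord card_bool addnC leq_add2r card_boxes_at.
Qed.

Definition class_type (A : {set V * V}) : 'I_3 + 'I_m :=
  key_type (ekey (odflt (alpha, alpha) [pick f in A])).

Lemma theta_class_mem e f : is_edge adj e -> f \in theta_class adj e ->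
  is_edge adj f /\ ekey f = ekey e.
Proof. by move=> ee; rewrite mem_theta_class // => /andP[-> /eqP]. Qed.

Lemma theta_class_keyE e e' : is_edge adj e -> is_edge adj e' -> ekey e = ekey e' ->
  theta_class adj e = theta_class adj e'.
Proof. by move=> ee ee' eq_key; apply/setP => f; rewrite !mem_theta_class // eq_key. Qed.

Lemma class_type_theta e : is_edge adj e -> class_type (theta_class adj e) = key_type (ekey e).
Proof.
move=> ee; rewrite /class_type; case: pickP => [f /(theta_class_mem ee)[_ ->] // | /(_ e)].
by rewrite mem_theta_class // ee eqxx.
Qed.

Lemma flat_edge_levels f k t : is_edge adj f -> ekey f = inl (k, t) ->
  (coord k f.1.1 = t /\ coord k f.2.1 = t.+1) \/ (coord k f.1.1 = t.+1 /\ coord k f.2.1 = t).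
Proof.
case: f => x y xy; case: (edgeP xy) => // k' _ [step _] [<- <-].
by move: step; rewrite /diff1 /=; lia.
Qed.

Lemma vertical_edge_labels f i : is_edge adj f -> ekey f = inr i ->
  (f.1.2 = None /\ f.2.2 = Some i) \/ (f.1.2 = Some i /\ f.2.2 = None).
Proof. by case: f => x y xy; case: (edgeP xy) => // j _ lx ly _ [<-]; [left|right]. Qed.

Lemma parallel_classes_not_contact e e' k t t' : is_edge adj e -> is_edge adj e' ->
  ekey e = inl (k, t) -> ekey e' = inl (k, t') -> t != t' ->
  ~ contact_adj adj alpha (theta_class adj e) (theta_class adj e').
Proof.
move=> ee ee' key_e key_e' ne_t.
case=> [[v0 [v1 [v2 [v3 [_ in01 _ in12 in30]]]]] | [f [f' [/andP[in_f in_f'] df df' eq_o _]]]].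
  have [e01 k01] := theta_class_mem ee in01; rewrite key_e in k01.
  have [e12 k12] := theta_class_mem ee' in12; rewrite key_e' in k12.
  have [e30 k30] := theta_class_mem ee' in30; rewrite key_e' in k30.
  move: (flat_edge_levels e01 k01) (flat_edge_levels e12 k12) (flat_edge_levels e30 k30) ne_t.
  by move: (coord k v0.1) (coord k v1.1) (coord k v2.1) (coord k v3.1) => /=; lia.
have [ef kf] := theta_class_mem ee in_f; rewrite key_e in kf.
have [ef' kf'] := theta_class_mem ee' in_f'; rewrite key_e' in kf'.
by move: ne_t; rewrite -(directed_flat_origin ef df kf) -(directed_flat_origin ef' df' kf') eq_o eqxx.
Qed.

Lemma box_classes_contact_meet e e' i j : is_edge adj e -> is_edge adj e' ->
  ekey e = inr i -> ekey e' = inr j -> i != j ->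
  contact_adj adj alpha (theta_class adj e) (theta_class adj e') -> boxes_meet B i j.
Proof.
move=> ee ee' key_e key_e' /eqP ne_ij.
case=> [[v0 [v1 [v2 [v3 [_ in01 _ in12 in30]]]]] | [f [f' [/andP[in_f in_f'] df df' eq_o _]]]].
  have [e01 k01] := theta_class_mem ee in01; rewrite key_e in k01.
  have [e12 k12] := theta_class_mem ee' in12; rewrite key_e' in k12.
  have [e30 k30] := theta_class_mem ee' in30; rewrite key_e' in k30.
  move: (vertical_edge_labels e01 k01) (vertical_edge_labels e12 k12).
  move: (vertical_edge_labels e30 k30) => /=.
  by case=> -[? ?] [] [? ?] [] [? ?]; congruence.
have [ef kf] := theta_class_mem ee in_f; rewrite key_e in kf.
have [ef' kf'] := theta_class_mem ee' in_f'; rewrite key_e' in kf'.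
apply: boxes_meet_in_box (vertical_edge_in_box ef kf) _.
by rewrite eq_o; apply: vertical_edge_in_box ef' kf'.
Qed.

Lemma class_type_inj C : contact_clique adj alpha C -> {in C &, injective class_type}.
Proof.
move=> [classC adjC] A A' AC A'C.
have [e ee eA] := classC A AC; have [e' ee' eA'] := classC A' A'C.
rewrite eA eA' in AC A'C *; rewrite !class_type_theta //.
have [same_key _|ne_key eq_type] := eqVneq (ekey e) (ekey e'); first exact: theta_class_keyE.
have ne_class : theta_class adj e != theta_class adj e'.
  apply: contra_neq ne_key => eq_class.
  have : e \in theta_class adj e' by rewrite -eq_class mem_theta_class // ee eqxx.
  by case/(theta_class_mem ee').
have contact := adjC _ _ AC A'C ne_class.
move: eq_type ne_key.
case key_e: (ekey e) => [[k t]|i]; case key_e': (ekey e') => [[k' t']|i'] //= [eq_k] ne_key.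
  subst k'; case: (parallel_classes_not_contact ee ee' key_e key_e' _ contact).
  by apply: contra_neq ne_key => ->.
by rewrite eq_k eqxx in ne_key.
Qed.

Lemma clique_card_le C : contact_clique adj alpha C -> #|C| <= omega B + 3.
Proof.
move=> cliqueC; have [classC adjC] := cliqueC.
rewrite -(card_in_imset (class_type_inj cliqueC)).
set S := [set i | inr i \in class_type @: C].
have S_edge i : i \in S -> exists2 e, theta_class adj e \in C & is_edge adj e /\ ekey e = inr i.
  rewrite inE => /imsetP[A AC type_A]; have [e ee eA] := classC A AC.
  exists e; first by rewrite -eA.
  by split=> //; move: type_A; rewrite eA class_type_theta //; case: (ekey e) => [[? ?]|?] //= [->].
have S_meet : #|S| <= omega B.
  apply: leq_omega => i j /S_edge[e eC [ee key_e]] /S_edge[e' e'C [ee' key_e']].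
  have [<-|ne_ij] := eqVneq i j.
    by have i_in := vertical_edge_in_box ee key_e; exact (boxes_meet_in_box i_in i_in).
  have ne_class : theta_class adj e != theta_class adj e'.
    apply: contra_neq ne_ij => eq_class.
    by move: (class_type_theta ee); rewrite eq_class class_type_theta // key_e key_e' => -[].
  exact: box_classes_contact_meet ee ee' key_e key_e' ne_ij (adjC _ _ eC e'C ne_class).
have types_C : class_type @: C \subset [set inl k | k in [set: 'I_3]] :|: [set inr i | i in S].
  by apply/subsetP => -[k|i] type_in; rewrite inE; apply/orP; [left|right]; rewrite imset_f // inE.
apply: leq_trans (subset_leq_card types_C) _; apply: leq_trans (card_imsetU_le _ _ _ _) _.
by rewrite cardsT card_ord addnC leq_add2r.
Qed.

End Tilde.

Theorem lemma4 (k1 k2 k3 m : nat) (B : boxes m) :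
  1 <= k1 -> 1 <= k2 -> 1 <= k3 -> boxes_ok k1 k2 k3 B ->
  let adj := @tadj k1 k2 k3 m B in
  let alpha := alpha0 k1 k2 k3 m in
  [/\ (forall x, tvalid B x -> out_degree adj alpha x <= omega B + 3),
      (forall x, tvalid B x -> degree adj x <= omega B + 6) &
      (forall C : {set {set tV k1 k2 k3 m * tV k1 k2 k3 m}},
          contact_clique adj alpha C -> #|C| <= omega B + 3)].
Proof.
move=> _ _ _ _ adj alpha.
by split=> [x _ | x _ | C]; [apply: out_degree_le | apply: degree_le | apply: clique_card_le].
Qed.
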